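(* Let $G=(\mathfrak{N},\mathfrak{T},\mathfrak{R},\mathfrak{S})$ be a context-free grammar, $\Sigma$ a set of characters, $(\textsl{Lex},\textsl{Sel})$ a local lexing with respect to $\mathfrak{T}$ and $\Sigma$, and $D\in\Sigma^*$. Then Earley's algorithm with local lexing is sound and complete: \[ D\in\mathcal{L}_\Sigma \quad\Longleftrightarrow\quad \exists\,\alpha.\ (\mathfrak{S}\rightarrow\alpha\,\bullet,\,0,\,|D|)\in\mathfrak{I}, \] where $\mathcal{L}_\Sigma=\{D\in\Sigma^*\mid \ell\ell(D)\neq\emptyset\}$ and $\ell\ell(D)$ and $\mathfrak{I}$ are as defined in the context.
   Context: Notation: for a set $U$, $U^*$ is the set of finite sequences over $U$, $\varepsilon$ the empty sequence, juxtaposition is concatenation, $|\alpha|$ the length and $\alpha_i$ ($0\le i<|\alpha|$) the $i$-th element. A context-free grammar $(\mathfrak{N},\mathfrak{T},\mathfrak{R},\mathfrak{S})$ has disjoint nonterminals $\mathfrak{N}$ and terminals $\mathfrak{T}$, rules $\mathfrak{R}\subseteq\mathfrak{N}\times(\mathfrak{N}\cup\mathfrak{T})^*$ (written $N\rightarrow\alpha$), start symbol $\mathfrak{S}$; $\alpha\Rightarrow\beta$ iff $\alpha=\alpha_0N\alpha_1$, $\beta=\alpha_0\gamma\alpha_1$ with $N\rightarrow\gamma$; $\overset{*}{\Rightarrow}$ is its reflexive-transitive closure. $\mathcal{L}=\{w\in\mathfrak{T}^*\mid\mathfrak{S}\overset{*}{\Rightarrow}w\}$ and $\mathcal{L}_{\text{prefix}}=\{w\in\mathfrak{T}^*\mid\exists\alpha\in(\mathfrak{N}\cup\mathfrak{T})^*.\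 \mathfrak{S}\overset{*}{\Rightarrow}w\alpha\}$. Tokens: a token is a pair $x=(t,c)\in\mathfrak{T}\times\Sigma^*$; $[x]=t$, $\overline{x}=c$; it is empty iff $|c|=0$. For a token sequence (path) $q=x_0\ldots x_r$, $[q]=[x_0]\ldots[x_r]\in\mathfrak{T}^*$ and $\overline{q}=\overline{x_0}\ldots\overline{x_r}\in\Sigma^*$. Local lexing: a pair $(\textsl{Lex},\textsl{Sel})$ where $\textsl{Lex}$ assigns to each $t\in\mathfrak{T}$ a function $\textsl{Lex}(t)$ which, given $D\in\Sigma^*$ and $k\in\{0,\ldots,|D|\}$, returns a set of tokens $(t,c)$ with $k+|c|\le|D|$ and $c_i=D_{k+i}$ for $0\le i\le|c|-1$; and $\textsl{Sel}$ maps any two token sets $A\subseteq B$ to a token set $\textsl{Sel}(A,B)$ with $A\subseteq\textsl{Sel}(A,B)\subseteq B$. Semantics: $\operatorname{limit} f\,X=\bigcup_{n\ge0}f^n(X)$. $\operatorname{Append}_k\,T\,P=P\cup\{pt\mid p\in P,\ |\overline{p}|=k,\ t\in T,\ [pt]\in\mathcal{L}_{\text{prefix}}\}$. For $k\in\{0,\ldots,|D|\}$: $\mathcal{X}_k=\{x\in\mathfrak{T}\times\Sigma^*\mid x\in\textsl{Lex}([x])(D,k)\}$; $\mathcal{P}_0^0=\{\varepsilon\}$; $\mathcal{W}_k^u=\{x\in\mathcal{X}_k\mid\exists p\in\mathcal{P}_k^u.\ |\overline{p}|=k\wedge[px]\in\mathcal{L}_{\text{prefix}}\}$; $\mathcal{Z}_k^0=\emptyset$;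 $\mathcal{Z}_k^{u+1}=\textsl{Sel}(\mathcal{Z}_k^u,\mathcal{W}_k^u)$; $\mathcal{P}_k^{u+1}=\operatorname{limit}(\operatorname{Append}_k\,\mathcal{Z}_k^{u+1})\,\mathcal{P}_k^u$; $\mathcal{P}_k^\infty=\bigcup_u\mathcal{P}_k^u$; $\mathcal{P}_{k+1}^0=\mathcal{P}_k^\infty$. Finally $\mathfrak{P}=\mathcal{P}_{|D|}^\infty$ and $\ell\ell(D)=\{p\in\mathfrak{P}\mid|\overline{p}|=|D|\wedge[p]\in\mathcal{L}\}$. Earley items: an item is $(N\rightarrow\alpha\bullet\beta,i,j)$ with $(N\rightarrow\alpha\beta)\in\mathfrak{R}$, $0\le i\le j\le|D|$. For item sets $I$, token sets $T$, position $k$: $\operatorname{Init}=\{(\mathfrak{S}\rightarrow\bullet\alpha,0,0)\mid\mathfrak{S}\rightarrow\alpha\in\mathfrak{R}\}$; $\operatorname{Predict}\,k\,I=I\cup\{(M\rightarrow\bullet\gamma,k,k)\mid\exists N,\alpha,\beta,i.\ (N\rightarrow\alpha\bullet M\beta,i,k)\in I\wedge(M\rightarrow\gamma)\in\mathfrak{R}\}$; $\operatorname{Complete}\,k\,I=I\cup\{(N\rightarrow\alpha M\bullet\beta,i,k)\mid\exists j,\gamma.\ (N\rightarrow\alpha\bullet M\beta,i,j)\in I\wedge(M\rightarrow\gamma\bullet,j,k)\in I\}$; $\operatorname{Tokens}\,T\,k\,I=\textsl{Sel}\big(T,\{x\mid\exists X\in\mathfrak{T},N,\alpha,\beta,i.\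 (N\rightarrow\alpha\bullet X\beta,i,k)\in I\wedge x\in\textsl{Lex}(X)(D,k)\}\big)$; $\operatorname{Scan}\,T\,k\,I=I\cup\{(N\rightarrow\alpha X\bullet\beta,i,k+|c|)\mid(X,c)\in T\wedge(N\rightarrow\alpha\bullet X\beta,i,k)\in I\}$; $\pi_k\,T\,I=\operatorname{limit}(\operatorname{Scan}\,T\,k\circ\operatorname{Complete}\,k\circ\operatorname{Predict}\,k)\,I$. Then $\mathcal{J}_0^0=\pi_0\,\emptyset\,\operatorname{Init}$; $\mathcal{T}_k^0=\emptyset$; $\mathcal{T}_k^{u+1}=\operatorname{Tokens}\,\mathcal{T}_k^u\,k\,\mathcal{J}_k^u$; $\mathcal{J}_k^{u+1}=\pi_k\,\mathcal{T}_k^{u+1}\,\mathcal{J}_k^u$; $\mathcal{I}_k=\bigcup_u\mathcal{J}_k^u$; $\mathcal{J}_{k+1}^0=\pi_{k+1}\,\emptyset\,\mathcal{I}_k$; and $\mathfrak{I}=\mathcal{I}_{|D|}$. *)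

From mathcomp Require Import all_boot.
From Stdlib Require Import Relations.

Set Implicit Arguments.
Unset Strict Implicit.
Unset Printing Implicit Defensive.

Inductive symbol (N T : Type) : Type :=
| Nt : N -> symbol N T
| Tm : T -> symbol N T.
Arguments Nt {N T} _.
Arguments Tm {N T} _.

Section LocalLexing.
Context {N T Sigma : Type}.
(* rules  R N alpha  <->  (N -> alpha) is a rule; S is the start symbol *)
Variable R : N -> seq (symbol N T) -> Prop.
Variable S : N.

Definition derives1 (a b : seq (symbol N T)) : Prop :=
  exists a0 a1 M g, R M g /\ a = a0 ++ Nt M :: a1 /\ b = a0 ++ g ++ a1.
Definition derives := clos_refl_trans _ derives1.

Definition lang (w : seq T) : Prop := derives [:: Nt S] (map Tm w).
Definition lang_prefix (w : seq T) : Prop :=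
  exists alpha, derives [:: Nt S] (map Tm w ++ alpha).

Definition token := (T * seq Sigma)%type.
Definition path := seq token.
Definition terms (q : path) : seq T := map fst q.
Definition chars (q : path) : seq Sigma := flatten (map snd q).

Definition lexer := T -> seq Sigma -> nat -> token -> Prop.
Definition selector := (token -> Prop) -> (token -> Prop) -> (token -> Prop).

Definition is_lexer (Lex : lexer) : Prop :=
  forall t D k, k <= size D -> forall x, Lex t D k x ->
    x.1 = t /\ k + size x.2 <= size D /\
    (forall i (x0 : Sigma), i < size x.2 -> nth x0 x.2 i = nth x0 D (k + i)).

Definition is_selector (Sel : selector) : Prop :=
  forall A B : token -> Prop, (forall x, A x -> B x) ->
    (forall x, A x -> Sel A B x) /\ (forall x, Sel A B x -> B x).

Definition limit {X : Type} (f : (X -> Prop) -> (X -> Prop)) (A : X -> Prop) : X -> Prop :=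
  fun x => exists n, iter n f A x.

Variable Lex : lexer.
Variable Sel : selector.
Variable D : seq Sigma.

Definition Append (k : nat) (Z : token -> Prop) (P : path -> Prop) : path -> Prop :=
  fun q => P q \/ exists p t, P p /\ size (chars p) = k /\ Z t /\
             lang_prefix (terms (rcons p t)) /\ q = rcons p t.

Definition Xk (k : nat) : token -> Prop := fun x => Lex x.1 D k x.

Definition Wk (k : nat) (P : path -> Prop) : token -> Prop :=
  fun x => Xk k x /\ exists p, P p /\ size (chars p) = k /\ lang_prefix (terms (rcons p x)).

(* (Z_k^u, P_k^u) -> (Z_k^{u+1}, P_k^{u+1}) *)
Definition ll_step (k : nat) (ZP : (token -> Prop) * (path -> Prop))
  : (token -> Prop) * (path -> Prop) :=
  let Z' := Sel ZP.1 (Wk k ZP.2) in (Z', limit (Append k Z') ZP.2).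

Fixpoint P0 (k : nat) : path -> Prop :=
  match k with
  | 0 => fun p => p = [::]
  | k'.+1 => fun p => exists u, (iter u (ll_step k') (fun _ => False, P0 k')).2 p
  end.
Definition Pu (k u : nat) : path -> Prop := (iter u (ll_step k) (fun _ => False, P0 k)).2.
Definition Pinf (k : nat) : path -> Prop := fun p => exists u, Pu k u p.

Definition frakP : path -> Prop := Pinf (size D).
Definition ll : path -> Prop :=
  fun p => frakP p /\ size (chars p) = size D /\ lang (terms p).

(* (lhs -> before . after, origin, end) *)
Definition item := (N * seq (symbol N T) * seq (symbol N T) * nat * nat)%type.

Definition Init : item -> Prop :=
  fun it => exists alpha, R S alpha /\ it = (S, [::], alpha, 0, 0).

Definition Predict (k : nat) (I : item -> Prop) : item -> Prop :=
  fun it => I it \/ exists M0 alpha M beta i gamma,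
    I (M0, alpha, Nt M :: beta, i, k) /\ R M gamma /\ it = (M, [::], gamma, k, k).

Definition Complete (k : nat) (I : item -> Prop) : item -> Prop :=
  fun it => I it \/ exists M0 alpha M beta i j gamma,
    I (M0, alpha, Nt M :: beta, i, j) /\ I (M, gamma, [::], j, k) /\
    it = (M0, rcons alpha (Nt M), beta, i, k).

Definition Tokens (Tk : token -> Prop) (k : nat) (I : item -> Prop) : token -> Prop :=
  Sel Tk (fun x => exists X M0 alpha beta i,
            I (M0, alpha, Tm X :: beta, i, k) /\ Lex X D k x).

Definition Scan (Tk : token -> Prop) (k : nat) (I : item -> Prop) : item -> Prop :=
  fun it => I it \/ exists X c M0 alpha beta i,
    Tk (X, c) /\ I (M0, alpha, Tm X :: beta, i, k) /\
    it = (M0, rcons alpha (Tm X), beta, i, k + size c).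

Definition pi (k : nat) (Tk : token -> Prop) (I : item -> Prop) : item -> Prop :=
  limit (fun J => Scan Tk k (Complete k (Predict k J))) I.

(* (T_k^u, J_k^u) -> (T_k^{u+1}, J_k^{u+1}) *)
Definition earley_step (k : nat) (TJ : (token -> Prop) * (item -> Prop))
  : (token -> Prop) * (item -> Prop) :=
  let T' := Tokens TJ.1 k TJ.2 in (T', pi k T' TJ.2).

Fixpoint J0 (k : nat) : item -> Prop :=
  match k with
  | 0 => pi 0 (fun _ => False) Init
  | k'.+1 => pi k'.+1 (fun _ => False)
               (fun it => exists u, (iter u (earley_step k') (fun _ => False, J0 k')).2 it)
  end.
Definition Ju (k u : nat) : item -> Prop := (iter u (earley_step k) (fun _ => False, J0 k)).2.
Definition Ik (k : nat) : item -> Prop := fun it => exists u, Ju k u it.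

Definition frakI : item -> Prop := Ik (size D).

End LocalLexing.

(* Both constructions are described by one inductive closure: Earley's deduction
   rules run with the readable tokens fixed in advance, [V j] being those that may
   be read at position [j].  A V-chain is a path each of whose tokens lies in
   [V j] for its start position [j].  An invariant on items (soundness) and an
   induction on derivation forests (completeness) show that the closure can scan
   a terminal [X] at [k] iff some V-chain reaching [k], extended by [X], is a
   language prefix, and that it accepts iff some V-chain is a sentence.  At stage
   [u] of position [k], with V the tokens selected so far, the local-lexing paths
   are exactly the V-chains that are language prefixes and the Earley items are
   exactly the closure.  Hence both constructions hand the same candidate tokens
   to [Sel], by induction on [(k, u)] they select the same tokens, and the
   theorem follows from the acceptance criterion. *)
From Pilot Require Import Defs.
From mathcomp Require Import all_boot zify.
From Stdlib Require Import Relations FunctionalExtensionality PropExtensionality.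

Set Implicit Arguments.
Unset Strict Implicit.
Unset Printing Implicit Defensive.

Lemma incr_sets_leq (A : Type) (F : nat -> A -> Prop) :
  (forall n x, F n x -> F n.+1 x) -> forall m n x, m <= n -> F m x -> F n x.
Proof.
move=> FS m n x /subnKC <-; elim: (n - m) => [|d IH]; first by rewrite addn0.
by move=> /IH; rewrite addnS; apply: FS.
Qed.

Lemma pred_ext (A : Type) (P Q : A -> Prop) : (forall x, P x <-> Q x) -> P = Q.
Proof.
by move=> PQ; apply: functional_extensionality => x; apply: propositional_extensionality.
Qed.

Section Lists.
Variable A : Type.

Lemma cat_eq_cat_cons (b c b0 b1 : seq A) x :
  b ++ c = b0 ++ x :: b1 ->
  (exists b', b = b0 ++ x :: b' /\ b1 = b' ++ c) \/
  (exists c0, c = c0 ++ x :: b1 /\ b0 = b ++ c0).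
Proof.
elim: b0 b => [|y b0 IH] [|z b] /=.
- by move=> ->; right; exists [::].
- by case=> -> <-; left; exists b.
- by move=> ->; right; exists (y :: b0).
- case=> -> /IH [[b' [-> ->]]|[c0 [-> ->]]]; [left; exists b' | right; exists c0]; by [].
Qed.

Lemma cat_eq_map (B : Type) (f : A -> B) s b c : b ++ c = map f s ->
  exists s1 s2, [/\ s = s1 ++ s2, b = map f s1 & c = map f s2].
Proof.
elim: b s => [|y b IH] s /=; first by move=> ->; exists [::], s.
case: s => [|x s] //= [-> /IH [s1 [s2 [-> -> ->]]]]; by exists (x :: s1), s2.
Qed.

End Lists.

Section Chains.
Variables (T Sigma : Type).
Local Notation token := (@token T Sigma).

Lemma size_chars_cons (x : token) q : size (chars (x :: q)) = size x.2 + size (chars q).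
Proof. by rewrite /chars /= size_cat. Qed.

Lemma size_chars_cat (q1 q2 : seq token) :
  size (chars (q1 ++ q2)) = size (chars q1) + size (chars q2).
Proof. by rewrite /chars map_cat flatten_cat size_cat. Qed.

Lemma size_chars_rcons q (x : token) : size (chars (rcons q x)) = size (chars q) + size x.2.
Proof. by rewrite -cats1 size_chars_cat size_chars_cons addn0. Qed.

Fixpoint chain (V : nat -> token -> Prop) (j : nat) (q : seq token) : Prop :=
  if q is x :: q' then V j x /\ chain V (j + size x.2) q' else True.

Lemma chain_cat V j q1 q2 :
  chain V j (q1 ++ q2) <-> chain V j q1 /\ chain V (j + size (chars q1)) q2.
Proof.
elim: q1 j => [|x q1 IH] j /=; first by rewrite addn0; tauto.
by rewrite IH size_chars_cons addnA; tauto.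
Qed.

Lemma chain_rcons V j q x : chain V j (rcons q x) <-> chain V j q /\ V (j + size (chars q)) x.
Proof. by rewrite -cats1 chain_cat /=; tauto. Qed.

Lemma chain_mono (V V' : nat -> token -> Prop) j q :
  (forall j x, V j x -> V' j x) -> chain V j q -> chain V' j q.
Proof. by move=> VV'; elim: q j => [|x q IH] j //= [Vx Vq]; split; auto. Qed.

Lemma chain_iff (V V' : nat -> token -> Prop) j q :
  (forall j x, V j x <-> V' j x) -> chain V j q <-> chain V' j q.
Proof. by move=> VV'; split; apply: chain_mono => j' x /VV'. Qed.

Lemma chain_restrict (V V' : nat -> token -> Prop) j q m :
  (forall j' x, j' <= m -> V j' x -> V' j' x) -> j + size (chars q) <= m ->
  chain V j q -> chain V' j q.
Proof.
move=> VV'; elim: q j => [|x q IH] j //=; rewrite size_chars_cons => q_m [Vx Vq].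
split; [apply: VV' Vx | apply: IH Vq]; lia.
Qed.

Lemma chain_exists_stage (V : nat -> nat -> token -> Prop) j q :
  (forall u u' j x, u <= u' -> V u j x -> V u' j x) ->
  chain (fun j x => exists u, V u j x) j q -> exists u, chain (V u) j q.
Proof.
move=> V_mono; elim: q j => [|x q IH] j /=; first by exists 0.
case=> [[u1 Vx] /IH [u2 Vq]]; exists (maxn u1 u2); split.
- by apply: V_mono Vx; lia.
- by apply: chain_mono Vq => j' y; apply: V_mono; lia.
Qed.

(* The tokens usable at position [j] while stage [u] of position [k] is running:
   every token ever selected at an earlier position, and those of the current
   stage at [k]. *)
Definition staged (F : nat -> nat -> token -> Prop) (k u j : nat) (x : token) : Prop :=
  (j < k /\ exists u', F j u' x) \/ (j = k /\ F k u x).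

Lemma staged_leq F k u u' j x :
  (forall u x, F k u x -> F k u.+1 x) -> u <= u' -> staged F k u j x -> staged F k u' j x.
Proof.
move=> F_succ u_u' [lt_jk | [-> Fx]]; first by left.
by right; split=> //; apply: incr_sets_leq u_u' Fx.
Qed.

Lemma staged_next F k u j x : staged F k u j x -> staged F k.+1 0 j x.
Proof. by case=> [[lt_jk Fx] | [-> Fx]]; left; split=> //; [lia | exists u]. Qed.

Lemma chain_staged_next F k q :
  (forall x, ~ F k.+1 0 x) -> (forall u x, F k u x -> F k u.+1 x) ->
  chain (staged F k.+1 0) 0 q <-> exists u, chain (staged F k u) 0 q.
Proof.
move=> F0 F_succ; split; last by case=> u; apply: chain_mono => j x; apply: staged_next.
move=> /(chain_mono (V' := fun j x => exists u, staged F k u j x)) q_ch.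
apply: (chain_exists_stage (V := staged F k)) => [u u' j x|]; first exact: staged_leq.
apply: q_ch => j x [[lt_jk [u' Fx]] | [_ /F0 //]].
have [lt_jk' | ge_jk] := ltnP j k; first by exists 0; left; split=> //; exists u'.
have eq_jk : j = k by lia.
by exists u'; right; split=> //; rewrite -eq_jk.
Qed.

Lemma staged_iff F G k u j x :
  (forall j, j < k -> forall u x, F j u x <-> G j u x) -> (forall x, F k u x <-> G k u x) ->
  staged F k u j x <-> staged G k u j x.
Proof.
move=> FG_lt FG_k; rewrite /staged FG_k.
by split=> [[[lt_jk [u' /FG_lt]] | ] | [[lt_jk [u' /FG_lt]] | ]]; auto; left; eauto.
Qed.

End Chains.

Section Derivations.
Variables (N T : Type) (R : N -> seq (symbol N T) -> Prop) (S : N).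
Local Notation sym := (symbol N T).
Local Notation derives := (derives R).

Lemma derives_refl a : derives a a.
Proof. exact: rt_refl. Qed.

Lemma derives_trans a b c : derives a b -> derives b c -> derives a c.
Proof. exact: rt_trans. Qed.

Lemma derives_ctx x y a b : derives a b -> derives (x ++ a ++ y) (x ++ b ++ y).
Proof.
elim=> [a' b' [a0 [a1 [M [g [Rg [-> ->]]]]]] | a' | a' b' c' _ IH1 _ IH2].
- by apply: rt_step; exists (x ++ a0), (a1 ++ y), M, g; rewrite -!catA.
- exact: rt_refl.
- exact: rt_trans IH1 IH2.
Qed.

Lemma derives_rule M g : R M g -> derives [:: Nt M] g.
Proof. by move=> Rg; apply: rt_step; exists [::], [::], M, g; rewrite cats0. Qed.

Lemma lang_prefix_cat w1 w2 : lang_prefix R S (w1 ++ w2) -> lang_prefix R S w1.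
Proof. by case=> al S_w; exists (map Tm w2 ++ al); rewrite catA -map_cat. Qed.

Lemma lang_prefix_lang w : lang R S w -> lang_prefix R S w.
Proof. by exists [::]; rewrite cats0. Qed.

(* Derivations as forests of derivation trees, one tree per symbol of the
   source: unlike [derives], they decompose along the source sequence. *)
Inductive forest : seq sym -> seq sym -> Prop :=
| forest_nil : forest [::] [::]
| forest_cons s a b c : tree s b -> forest a c -> forest (s :: a) (b ++ c)
with tree : sym -> seq sym -> Prop :=
| tree_leaf s : tree s [:: s]
| tree_node M g b : R M g -> forest g b -> tree (Nt M) b.

Scheme forest_tree_ind := Induction for forest Sort Prop
with tree_forest_ind := Induction for tree Sort Prop.

Lemma forest_refl a : forest a a.
Proof. by elim: a => [|s a IH]; [exact: forest_nil | exact: (forest_cons (tree_leaf s) IH)]. Qed.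

Lemma forest_cat a b a' b' : forest a b -> forest a' b' -> forest (a ++ a') (b ++ b').
Proof.
by elim=> [//|s a0 b0 c0 t _ IH] f'; rewrite /= -catA; apply: forest_cons t (IH f').
Qed.

Lemma forest_tree s b : tree s b -> forest [:: s] b.
Proof. by move=> t; rewrite -(cats0 b); apply: forest_cons t forest_nil. Qed.

Lemma forest_derives a b : forest a b -> derives a b.
Proof.
move: a b; apply (@forest_tree_ind (fun a b (_ : forest a b) => derives a b)
                                   (fun s b (_ : tree s b) => derives [:: s] b)).
- exact: derives_refl.
- move=> s a b c _ s_b _ a_c; apply: (@derives_trans _ (b ++ a)).
  + by have := derives_ctx [::] a s_b.
  + by have := derives_ctx b [::] a_c; rewrite !cats0.
- by move=> s; apply: derives_refl.
- by move=> M g b Rg _ g_b; apply: derives_trans (derives_rule Rg) g_b.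
Qed.

Lemma forest_step a b c : forest a b -> derives1 R b c -> forest a c.
Proof.
move=> f [b0 [b1 [M [g [Rg [eq_b ->]]]]]].
move: a b f b0 b1 eq_b.
apply (@forest_tree_ind
  (fun a b (_ : forest a b) => forall b0 b1, b = b0 ++ Nt M :: b1 -> forest a (b0 ++ g ++ b1))
  (fun s b (_ : tree s b) => forall b0 b1, b = b0 ++ Nt M :: b1 -> tree s (b0 ++ g ++ b1))).
- by move=> [].
- move=> s a b' c' t IHt f IHf b0 b1 eq_bc.
  case: (cat_eq_cat_cons eq_bc) => [[b2 [eq_b ->]] | [c0 [eq_c ->]]].
  + by have := forest_cons (IHt b0 b2 eq_b) f; rewrite -!catA.
  + by rewrite -!catA; apply: forest_cons t (IHf c0 b1 eq_c).
- move=> s [|y b0] b1 /=; last by case=> _; case: b0.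
  by case=> -> <-; rewrite cats0; apply: tree_node Rg (forest_refl g).
- by move=> M' g' b' Rg' _ IH b0 b1 /IH; apply: tree_node.
Qed.

Lemma derives_forest a b : derives a b -> forest a b.
Proof.
move=> /clos_rt_rtn1_iff; elim=> [|b' c b_c _ IH]; first exact: forest_refl.
exact: forest_step IH b_c.
Qed.

Lemma derives_Nt_inv M w :
  derives [:: Nt M] w -> w = [:: Nt M] \/ exists2 g, R M g & forest g w.
Proof.
move=> /derives_forest f; inversion f as [|s a b c t f_nil]; subst.
inversion f_nil; subst; rewrite cats0.
by inversion t; subst; [left | right; exists g].
Qed.

End Derivations.

Section EarleyClosure.
Variables (N T Sigma : Type) (R : N -> seq (symbol N T) -> Prop) (S : N).
Local Notation token := (@token T Sigma).
Local Notation item := (@item N T).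
Local Notation forest := (forest R).

(* The tokens readable at position [j] are fixed in advance as [V j] instead of
   being selected while the items grow. *)
Inductive earley (V : nat -> token -> Prop) (k : nat) : item -> Prop :=
| earley_init al : R S al -> earley V k (S, [::], al, 0, 0)
| earley_predict M0 al M be i j ga :
    earley V k (M0, al, Nt M :: be, i, j) -> j <= k -> R M ga -> earley V k (M, [::], ga, j, j)
| earley_complete M0 al M be i j l ga :
    earley V k (M0, al, Nt M :: be, i, j) -> earley V k (M, ga, [::], j, l) -> l <= k ->
    earley V k (M0, rcons al (Nt M), be, i, l)
| earley_scan M0 al X be i j c :
    earley V k (M0, al, Tm X :: be, i, j) -> j <= k -> V j (X, c) ->
    earley V k (M0, rcons al (Tm X), be, i, j + size c).

Lemma earley_mono (V V' : nat -> token -> Prop) k k' it :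
  (forall j x, V j x -> V' j x) -> k <= k' -> earley V k it -> earley V' k' it.
Proof.
move=> VV' k_k'; elim=> {it}.
- by move=> al; apply: earley_init.
- by move=> M0 al M be i j ga _ IH j_k; apply: earley_predict IH _; lia.
- by move=> M0 al M be i j l ga _ IH1 _ IH2 l_k; apply: earley_complete IH1 IH2 _; lia.
- by move=> M0 al X be i j c _ IH j_k /VV'; apply: earley_scan IH _; lia.
Qed.

Lemma earley_origin_le V k it : earley V k it -> it.1.2 <= it.2.
Proof. by elim=> //= *; lia. Qed.

Definition item_sound (V : nat -> token -> Prop) (it : item) : Prop :=
  let: (M, al, be, i, j) := it in
  R M (al ++ be) /\ exists p0 p1 de,
    [/\ chain V 0 (p0 ++ p1), size (chars p0) = i, size (chars (p0 ++ p1)) = j,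
        forest al (map Tm (terms p1))
      & derives R [:: Nt S] (map Tm (terms p0) ++ Nt M :: de)].

Lemma derives_item_context M al be (p0 p1 : seq token) de :
  R M (al ++ be) -> forest al (map Tm (terms p1)) ->
  derives R [:: Nt S] (map Tm (terms p0) ++ Nt M :: de) ->
  derives R [:: Nt S] (map Tm (terms (p0 ++ p1)) ++ be ++ de).
Proof.
move=> Rit al_p1 /derives_trans; apply.
apply: derives_trans (derives_ctx _ de (derives_rule Rit)) _.
have := derives_ctx (map Tm (terms p0)) (be ++ de) (forest_derives al_p1).
by rewrite /terms !map_cat -!catA.
Qed.

Lemma earley_sound V k it : earley V k it -> item_sound V it.
Proof.
elim=> {it}.
- move=> al S_al; split=> //; exists [::], [::], [::]; split=> //.
  + exact: forest_nil.
  + exact: derives_refl.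
- move=> M0 al M be i j ga _ [Rit [p0 [p1 [de [ch _ <- al_p1 S_p0]]]]] _ Rga /=.
  split=> //; exists (p0 ++ p1), [::], (be ++ de); rewrite cats0; split=> //.
  + exact: forest_nil.
  + exact: derives_item_context Rit al_p1 S_p0.
- move=> M0 al M be i j l ga _ [Rit [p0 [p1 [de [ch <- <- al_p1 S_p0]]]]]
         _ [Rga [p0' [p2 [_ [ch' p0'_j <- ga_p2 _]]]]] _ /=.
  split; first by rewrite cat_rcons.
  exists p0, (p1 ++ p2), de; rewrite catA; split=> //.
  + by apply/chain_cat; split=> //; move/chain_cat: ch' => []; rewrite p0'_j.
  + by rewrite [RHS]size_chars_cat p0'_j size_chars_cat.
  + rewrite /terms !map_cat -cats1; apply: forest_cat al_p1 (forest_tree _).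
    by rewrite cats0 in Rga; apply: tree_node Rga ga_p2.
- move=> M0 al X be i j c _ [Rit [p0 [p1 [de [ch <- <- al_p1 S_p0]]]]] _ Vx /=.
  split; first by rewrite cat_rcons.
  exists p0, (rcons p1 (X, c)), de; rewrite -rcons_cat; split=> //.
  + by apply/chain_rcons.
  + by rewrite size_chars_rcons.
  + by rewrite -!cats1 /terms !map_cat; apply: forest_cat al_p1 (forest_refl R _).
Qed.

Lemma cat_eq_terms (q : seq token) (b c : seq (symbol N T)) : b ++ c = map Tm (terms q) ->
  exists q1 q2, [/\ q = q1 ++ q2, b = map Tm (terms q1) & c = map Tm (terms q2)].
Proof.
rewrite /terms -(map_comp Tm fst) => /cat_eq_map [q1 [q2 [-> -> ->]]].
by exists q1, q2; rewrite !(map_comp Tm fst).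
Qed.

Lemma earley_advance V k be w : forest be w ->
  forall q M al be' i j, w = map Tm (terms q) ->
  earley V k (M, al, be ++ be', i, j) -> chain V j q -> j + size (chars q) <= k ->
  earley V k (M, al ++ be, be', i, j + size (chars q)).
Proof.
move: be w; apply (@forest_tree_ind _ _ R
  (fun be w (_ : forest be w) => forall q M al be' i j, w = map Tm (terms q) ->
    earley V k (M, al, be ++ be', i, j) -> chain V j q -> j + size (chars q) <= k ->
    earley V k (M, al ++ be, be', i, j + size (chars q)))
  (fun s w (_ : tree R s w) => forall q M al be i j, w = map Tm (terms q) ->
    earley V k (M, al, s :: be, i, j) -> chain V j q -> j + size (chars q) <= k ->
    earley V k (M, rcons al s, be, i, j + size (chars q)))).
- by move=> [|x q] //= M al be' i j _; rewrite cats0 addn0.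
- move=> s a b c _ IHs _ IHa q M al be' i j /cat_eq_terms [q1 [q2 [-> b_q1 c_q2]]].
  rewrite size_chars_cat => it /chain_cat [ch1 ch2] q_k.
  have it1 := IHs q1 M al (a ++ be') i j b_q1 it ch1 ltac:(lia).
  by rewrite -cat_rcons addnA; apply: IHa c_q2 it1 ch2 _; lia.
- move=> s [|[X c] [|y q]] //= M al be i j [->] it [Vx _].
  by rewrite size_chars_cons addn0 => j_k; apply: earley_scan it _ Vx; lia.
- move=> M g b Rg _ IH q M0 al be i j b_q it ch q_k.
  have pred : earley V k (M, [::], g ++ [::], j, j).
    by rewrite cats0; apply: earley_predict it _ Rg; lia.
  exact: earley_complete it (IH q M [::] [::] j j b_q pred ch q_k) q_k.
Qed.

Lemma earley_reach_terminal V k be w : forest be w ->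
  forall q X ga M al i j, w = map Tm (terms q) ++ Tm X :: ga ->
  earley V k (M, al, be, i, j) -> chain V j q -> j + size (chars q) = k ->
  exists M' al' be' i', earley V k (M', al', Tm X :: be', i', k).
Proof.
move: be w; apply (@forest_tree_ind _ _ R
  (fun be w (_ : forest be w) => forall q X ga M al i j, w = map Tm (terms q) ++ Tm X :: ga ->
    earley V k (M, al, be, i, j) -> chain V j q -> j + size (chars q) = k ->
    exists M' al' be' i', earley V k (M', al', Tm X :: be', i', k))
  (fun s w (_ : tree R s w) => forall q X ga M al be i j, w = map Tm (terms q) ++ Tm X :: ga ->
    earley V k (M, al, s :: be, i, j) -> chain V j q -> j + size (chars q) = k ->
    exists M' al' be' i', earley V k (M', al', Tm X :: be', i', k))).
- by move=> [].
- move=> s a b c t IHs _ IHa q X ga M al i j eq_bc.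
  case: (cat_eq_cat_cons eq_bc) => [[ga1 [b_q _]] | [c0 [c_c0 q_b]]].
  + by move=> it; apply: IHs b_q it.
  + have [q1 [q2 [-> b_q1 c0_q2]]] := cat_eq_terms (esym q_b).
    rewrite size_chars_cat => it /chain_cat [ch1 ch2] q_k.
    have it1 := earley_advance (forest_tree t) b_q1 (it : earley V k (M, al, [:: s] ++ a, i, j))
                  ch1 ltac:(lia).
    rewrite cats1 in it1; apply: IHa it1 ch2 _; last by lia.
    by rewrite c_c0 c0_q2.
- move=> s [|x q] X ga M al be i j /=.
  + by case=> -> _ it _; rewrite addn0 => j_k; subst k; exists M, al, be, i.
  + by case=> _; case: q.
- move=> M g b Rg _ IH q X ga M0 al be i j b_q it ch q_k.
  exact: IH b_q (earley_predict it ltac:(lia) Rg) ch q_k.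
Qed.

Lemma earley_terminal_iff V k X :
  (exists M al be i, earley V k (M, al, Tm X :: be, i, k)) <->
  (exists p, [/\ chain V 0 p, size (chars p) = k & lang_prefix R S (terms p ++ [:: X])]).
Proof.
split.
- move=> [M [al [be [i /earley_sound [Rit [p0 [p1 [de [ch _ p_k al_p1 S_p0]]]]]]]]].
  exists (p0 ++ p1); split=> //; exists (be ++ de).
  by rewrite map_cat -catA; apply: derives_item_context Rit al_p1 S_p0.
- move=> [p [ch p_k [al S_p]]]; case: (derives_Nt_inv S_p) => [|[g RSg g_p]].
  + by rewrite /terms map_cat; case: p {ch p_k S_p}.
  + apply: (earley_reach_terminal g_p (ga := al)) _ (earley_init V k RSg) ch _.
    * by rewrite /terms map_cat -catA.
    * by rewrite add0n.
Qed.

Lemma earley_accept_iff V n :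
  (exists al, earley V n (S, al, [::], 0, n)) <->
  (exists p, [/\ chain V 0 p, size (chars p) = n & lang R S (terms p)]).
Proof.
split.
- move=> [al /earley_sound [RSal [p0 [p1 [de [ch p0_0 p_n al_p1 _]]]]]].
  rewrite cats0 in RSal; rewrite size_chars_cat p0_0 in p_n.
  exists p1; split=> //; last exact: derives_trans (derives_rule RSal) (forest_derives al_p1).
  by move/chain_cat: ch => []; rewrite p0_0.
- move=> [p [ch p_n S_p]]; case: (derives_Nt_inv S_p) => [|[g RSg g_p]].
  + by case: p {ch p_n S_p}.
  + have init : earley V n (S, [::], g ++ [::], 0, 0) by rewrite cats0; apply: earley_init.
    by exists g; have := earley_advance g_p (erefl _) init ch ltac:(lia); rewrite add0n p_n.
Qed.

End EarleyClosure.

Section LocalLexingPaths.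
Variables (N T Sigma : Type) (R : N -> seq (symbol N T) -> Prop) (S : N)
  (Lex : @lexer T Sigma) (Sel : @selector T Sigma) (D : seq Sigma).
Hypothesis Sel_ok : is_selector Sel.
Local Notation token := (@token T Sigma).
Local Notation lp := (lang_prefix R S).
Local Notation P := (Pu R S Lex Sel D).
Local Notation W := (Wk R S Lex D).

Definition Zu k u : token -> Prop :=
  (iter u (ll_step R S Lex Sel D k) (fun _ => False, P0 R S Lex Sel D k)).1.

Lemma ZuS k u : Zu k u.+1 = Sel (Zu k u) (W k (P k u)).
Proof. by []. Qed.

Lemma PuS k u : P k u.+1 = limit (Append R S k (Zu k u.+1)) (P k u).
Proof. by []. Qed.

Lemma Pu_succ k u p : P k u p -> P k u.+1 p.
Proof. by rewrite PuS => Pp; exists 0. Qed.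

Lemma Zu_Wk k u x : Zu k u x -> W k (P k u) x.
Proof.
elim: u x => [//|u IH] x; rewrite ZuS => /((Sel_ok IH).2 x) [Xx [p [Pp p_k]]].
by split=> //; exists p; split=> //; apply: Pu_succ.
Qed.

Lemma Zu_succ k u x : Zu k u x -> Zu k u.+1 x.
Proof. by rewrite ZuS; apply: (Sel_ok (@Zu_Wk k u)).1. Qed.

Lemma Pu_succ_chain k u :
  (forall p, P k u p <-> chain (staged Zu k u) 0 p /\ lp (terms p)) ->
  forall p, P k u.+1 p -> chain (staged Zu k u.+1) 0 p /\ lp (terms p).
Proof.
move=> IHu p; rewrite PuS => -[n]; elim: n p => [|n IHn] p /=.
- move=> /IHu [ch lp_p]; split=> //.
  by apply: chain_mono ch => j x; apply: staged_leq => //; apply: Zu_succ.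
- case=> [/IHn // | [p' [t [/IHn [ch _] [p'_k [Zt [lp_t ->]]]]]]].
  by split=> //; apply/chain_rcons; split=> //; right; rewrite add0n.
Qed.

Lemma chain_Pu_succ k u :
  (forall p, P k u p <-> chain (staged Zu k u) 0 p /\ lp (terms p)) ->
  forall p, chain (staged Zu k u.+1) 0 p -> lp (terms p) -> P k u.+1 p.
Proof.
move=> IHu; elim/last_ind => [|p t IHp] ch lp_p.
  by apply/Pu_succ/IHu.
have lp_p' : lp (terms p).
  by apply: (lang_prefix_cat (w2 := [:: t.1])); rewrite /terms cats1 -map_rcons.
(* A last token starting before [k] was already available at stage [u]. *)
move/chain_rcons: ch => [ch]; rewrite add0n => -[[lt_k Zt] | [p_k Zt]].
- apply/Pu_succ/IHu; split=> //; apply/chain_rcons; split; last by left; rewrite add0n.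
  apply: (chain_restrict (m := size (chars p))) ch => // j x j_p.
  by case=> [[lt_jk Zx] | [eq_jk _]]; [left | lia].
- have [n Pp] := IHp ch lp_p'.
  by rewrite PuS; exists n.+1; right; exists p, t.
Qed.

Lemma Pu_chain_stages k :
  (forall p, P k 0 p <-> chain (staged Zu k 0) 0 p /\ lp (terms p)) ->
  forall u p, P k u p <-> chain (staged Zu k u) 0 p /\ lp (terms p).
Proof.
move=> Pk0; elim=> [|u IHu] p; first exact: Pk0.
by split; [apply: Pu_succ_chain | case; apply: chain_Pu_succ].
Qed.

Lemma Pu_chainP k u p : P k u p <-> chain (staged Zu k u) 0 p /\ lp (terms p).
Proof.
elim: k u p => [|k IHk]; apply: Pu_chain_stages => p.
- split=> [-> | [ch _]]; first by split=> //; exists [:: Nt S]; apply: derives_refl.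
  by case: p ch => [|x p] //= [[[] | [_ []]]].
- have stagesE := chain_staged_next p (fun x (Zx : Zu k.+1 0 x) => Zx) (@Zu_succ k).
  split=> [[u /IHk [ch lp_p]] | [/stagesE [u ch] lp_p]].
  + by split=> //; apply/stagesE; exists u.
  + by exists u; apply/IHk.
Qed.

End LocalLexingPaths.

Section EarleyItems.
Variables (N T Sigma : Type) (R : N -> seq (symbol N T) -> Prop) (S : N)
  (Lex : @lexer T Sigma) (Sel : @selector T Sigma) (D : seq Sigma).
Hypothesis Sel_ok : is_selector Sel.
Local Notation token := (@token T Sigma).
Local Notation item := (@item N T).
Local Notation J := (Ju R S Lex Sel D).
Local Notation I := (Ik R S Lex Sel D).

Section Closure.
Variables (k : nat) (Tk : token -> Prop) (I0 : item -> Prop).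
Local Notation closure := (Defs.pi R k Tk I0).
Local Notation step := (fun J => Scan Tk k (Complete k (Predict R k J))).

Lemma iter_step_leq m n it : m <= n -> iter m step I0 it -> iter n step I0 it.
Proof. by apply: incr_sets_leq => n' it' Jit; left; left; left. Qed.

Lemma pi_incl it : I0 it -> closure it.
Proof. by exists 0. Qed.

Lemma pi_predict it : Predict R k closure it -> closure it.
Proof.
case=> [//|[M0 [al [M [be [i [ga [[n Jn] [Rga ->]]]]]]]]].
by exists n.+1; left; left; right; exists M0, al, M, be, i, ga.
Qed.

Lemma pi_complete it : Complete k closure it -> closure it.
Proof.
case=> [//|[M0 [al [M [be [i [j [ga [[n1 J1] [[n2 J2] ->]]]]]]]]]].
exists (maxn n1 n2).+1; left; right; exists M0, al, M, be, i, j, ga.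
by split; [|split=> //]; left; [apply: iter_step_leq J1 | apply: iter_step_leq J2]; lia.
Qed.

Lemma pi_scan it : Scan Tk k closure it -> closure it.
Proof.
case=> [//|[X [c [M0 [al [be [i [Tx [[n Jn] ->]]]]]]]]].
by exists n.+1; right; exists X, c, M0, al, be, i; do !split=> //; left; left.
Qed.

Lemma pi_end it : closure it -> I0 it \/ k <= it.2.
Proof.
case=> n; elim: n it => [|n IH] it /=; first by left.
case=> [[[/IH // | ] | ] | ].
- by move=> [M0 [al [M [be [i [ga [_ [_ ->]]]]]]]]; right.
- by move=> [M0 [al [M [be [i [j [ga [_ [_ ->]]]]]]]]]; right.
- by move=> [X [c [M0 [al [be [i [_ [_ ->]]]]]]]]; right => /=; lia.
Qed.

Lemma pi_earley V :
  (forall it, I0 it -> earley R S V k it) -> (forall x, Tk x -> V k x) ->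
  forall it, closure it -> earley R S V k it.
Proof.
move=> I0_V Tk_V it [n]; elim: n it => [|n IH] it /=; first exact: I0_V.
have pred it' : Predict R k (iter n step I0) it' -> earley R S V k it'.
  case=> [/IH // | [M0 [al [M [be [i [ga [Jit [Rga ->]]]]]]]]].
  by apply: earley_predict (IH _ Jit) _ Rga; lia.
have comp it' : Complete k (Predict R k (iter n step I0)) it' -> earley R S V k it'.
  case=> [/pred // | [M0 [al [M [be [i [j [ga [J1 [J2 ->]]]]]]]]]].
  by apply: earley_complete (pred _ J1) (pred _ J2) _; lia.
case=> [/comp // | [X [c [M0 [al [be [i [Tx [Jit ->]]]]]]]]].
by apply: earley_scan (comp _ Jit) _ (Tk_V _ Tx); lia.
Qed.

End Closure.

Definition Tu k u : token -> Prop :=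
  (iter u (earley_step R Lex Sel D k) (fun _ => False, J0 R S Lex Sel D k)).1.

Definition scan_candidates k (J' : item -> Prop) (x : token) : Prop :=
  exists X M al be i, J' (M, al, Tm X :: be, i, k) /\ Lex X D k x.

Lemma TuS k u : Tu k u.+1 = Sel (Tu k u) (scan_candidates k (J k u)).
Proof. by []. Qed.

Lemma JuS k u : J k u.+1 = Defs.pi R k (Tu k u.+1) (J k u).
Proof. by []. Qed.

Lemma Ju00 : J 0 0 = Defs.pi R 0 (fun _ : token => False) (Init R S).
Proof. by []. Qed.

Lemma Ju0S k : J k.+1 0 = Defs.pi R k.+1 (fun _ : token => False) (I k).
Proof. by []. Qed.

Lemma Ju_pi k u : exists I0, J k u = Defs.pi R k (Tu k u) I0.
Proof. by case: u => [|u]; [case: k => [|k] |]; eexists; reflexivity. Qed.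

Lemma Ju_predict k u it : Predict R k (J k u) it -> J k u it.
Proof. by have [I0 ->] := Ju_pi k u; apply: pi_predict. Qed.

Lemma Ju_complete k u it : Complete k (J k u) it -> J k u it.
Proof. by have [I0 ->] := Ju_pi k u; apply: pi_complete. Qed.

Lemma Ju_scan k u it : Scan (Tu k u) k (J k u) it -> J k u it.
Proof. by have [I0 ->] := Ju_pi k u; apply: pi_scan. Qed.

Lemma Ju_succ k u it : J k u it -> J k u.+1 it.
Proof. by rewrite JuS; apply: pi_incl. Qed.

Lemma Ju_leq k u u' it : u <= u' -> J k u it -> J k u' it.
Proof. by move=> u_u'; apply: incr_sets_leq u_u'; apply: Ju_succ. Qed.

Lemma Ju_next k u it : J k u it -> J k.+1 0 it.
Proof. by move=> Jit; rewrite Ju0S; apply: pi_incl; exists u. Qed.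

Lemma Ju_lift k k' u u' it : k < k' -> J k u it -> J k' u' it.
Proof.
move=> lt_kk' /Ju_next Jit; apply: Ju_leq (leq0n u') _.
by apply: (incr_sets_leq (F := fun k => J k 0)) lt_kk' Jit => k0 it0; apply: Ju_next.
Qed.

Lemma Tu_candidates k u x : Tu k u x -> scan_candidates k (J k u) x.
Proof.
elim: u x => [//|u IH] x; rewrite TuS => /((Sel_ok IH).2 x).
by case=> [X [M [al [be [i [Jit Lx]]]]]]; exists X, M, al, be, i; split=> //; apply: Ju_succ.
Qed.

Lemma Tu_succ k u x : Tu k u x -> Tu k u.+1 x.
Proof. by rewrite TuS; apply: (Sel_ok (@Tu_candidates k u)).1. Qed.

Lemma Tu_leq k u u' x : u <= u' -> Tu k u x -> Tu k u' x.
Proof. by move=> u_u'; apply: incr_sets_leq u_u'; apply: Tu_succ. Qed.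

Lemma Ju_next_inv k u it : J k.+1 u it -> k < it.2 \/ I k it.
Proof.
elim: u it => [|u IH] it; [rewrite Ju0S | rewrite JuS] => /pi_end [Jit | le_it]; auto.
Qed.

Lemma Ju_local k u it : J k u it -> it.2 < k -> I it.2 it.
Proof.
elim: k u it => [//|k IH] u it /Ju_next_inv [lt_k | [u' Jit]] lt_it; first by lia.
have [lt_itk | ->] : it.2 < k \/ it.2 = k by lia.
- exact: IH Jit lt_itk.
- by exists u'.
Qed.

Lemma Ju_local_leq k u l it : J k u it -> it.2 <= l -> l < k -> exists u', J l u' it.
Proof.
move=> Jit it_l l_k; have [u' Jit'] := Ju_local Jit ltac:(lia).
have [lt_itl | eq_itl] : it.2 < l \/ it.2 = l by lia.
- by exists 0; apply: Ju_lift lt_itl Jit'.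
- by exists u'; rewrite -eq_itl.
Qed.

Lemma Ju_earley_succ k u :
  (forall it, J k u it -> earley R S (staged Tu k u) k it) ->
  forall it, J k u.+1 it -> earley R S (staged Tu k u.+1) k it.
Proof.
move=> IHu; rewrite JuS; apply: pi_earley => [it /IHu | x Tx]; last by right.
by apply: earley_mono => // j x; apply: staged_leq => //; apply: Tu_succ.
Qed.

Lemma Ju_earley k u it : J k u it -> earley R S (staged Tu k u) k it.
Proof.
elim: k u it => [|k IHk] u it; elim: u it => [|u IHu] it; try exact: Ju_earley_succ.
- by rewrite Ju00; apply: pi_earley => // it' [al [RSal ->]]; apply: earley_init.
- rewrite Ju0S; apply: pi_earley => // it' [u' /IHk].
  by apply: earley_mono => // j x; apply: staged_next.
Qed.

Lemma earley_Ju k u it : earley R S (staged Tu k u) k it -> J k u it.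
Proof.
(* An item ending at [l < k] is derived at position [l], from premises ending at
   or before [l], and then lifted to position [k]. *)
elim=> {it}.
- move=> al RSal; have init : J 0 0 (S, [::], al, 0, 0).
    by rewrite Ju00; apply: pi_incl; exists al.
  by case: k => [|k]; [apply: Ju_leq init | apply: Ju_lift init].
- move=> M0 al M be i j ga _ Jpar j_k Rga.
  have pred u' : J j u' (M0, al, Nt M :: be, i, j) -> J j u' (M, [::], ga, j, j).
    by move=> Jpar'; apply: Ju_predict; right; exists M0, al, M, be, i, ga.
  have [lt_jk | eq_jk] : j < k \/ j = k by lia.
  2: by subst j; apply: pred.
  have [u' Jpar'] := Ju_local_leq Jpar (leqnn j) lt_jk.
  exact: Ju_lift lt_jk (pred _ Jpar').
- move=> M0 al M be i j l ga _ Jpar child Jchild l_k.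
  have j_l : j <= l := earley_origin_le child.
  have comp u' : J l u' (M0, al, Nt M :: be, i, j) -> J l u' (M, ga, [::], j, l) ->
      J l u' (M0, rcons al (Nt M), be, i, l).
    by move=> J1 J2; apply: Ju_complete; right; exists M0, al, M, be, i, j, ga.
  have [lt_lk | eq_lk] : l < k \/ l = k by lia.
  2: by subst l; apply: comp.
  have [u1 Jpar'] := Ju_local_leq Jpar j_l lt_lk.
  have [u2 Jchild'] := Ju_local_leq Jchild (leqnn l) lt_lk.
  apply: (Ju_lift (u := maxn u1 u2)) lt_lk _.
  by apply: comp; [apply: Ju_leq Jpar' | apply: Ju_leq Jchild']; lia.
- move=> M0 al X be i j c _ Jpar j_k Xc.
  have scan u' : Tu j u' (X, c) -> J j u' (M0, al, Tm X :: be, i, j) ->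
      J j u' (M0, rcons al (Tm X), be, i, j + size c).
    by move=> Tx J1; apply: Ju_scan; right; exists X, c, M0, al, be, i.
  case: Xc => [[lt_jk [u1 Tx]] | [eq_jk Tx]]; last by subst j; apply: scan.
  have [u2 Jpar'] := Ju_local_leq Jpar (leqnn j) lt_jk.
  apply: (Ju_lift (u := maxn u1 u2)) lt_jk _.
  by apply: scan; [apply: Tu_leq Tx | apply: Ju_leq Jpar']; lia.
Qed.

Lemma Ju_earleyP k u it : J k u it <-> earley R S (staged Tu k u) k it.
Proof. by split; [apply: Ju_earley | apply: earley_Ju]. Qed.

End EarleyItems.

Section Correspondence.
Variables (N T Sigma : Type) (R : N -> seq (symbol N T) -> Prop) (S : N)
  (Lex : @lexer T Sigma) (Sel : @selector T Sigma) (D : seq Sigma).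
Hypotheses (Lex_ok : is_lexer Lex) (Sel_ok : is_selector Sel).
Local Notation lp := (lang_prefix R S).
Local Notation Zu := (Zu R S Lex Sel D).
Local Notation Tu := (Tu R S Lex Sel D).
Local Notation P := (Pu R S Lex Sel D).
Local Notation J := (Ju R S Lex Sel D).

Lemma Pu_chain_Tu k u p :
  (forall j x, staged Zu k u j x <-> staged Tu k u j x) ->
  P k u p <-> chain (staged Tu k u) 0 p /\ lp (terms p).
Proof.
move=> ZT; split=> [/(Pu_chainP R S Lex D Sel_ok k u) [ch lp_p] | [ch lp_p]].
- by split=> //; apply/(chain_iff _ _ ZT).
- by apply/(Pu_chainP R S Lex D Sel_ok k u); split=> //; apply/(chain_iff _ _ ZT).
Qed.

Lemma Wk_scan_candidates k u x : k <= size D ->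
  (forall j x, staged Zu k u j x <-> staged Tu k u j x) ->
  Wk R S Lex D k (P k u) x <-> scan_candidates Lex D k (J k u) x.
Proof.
move=> k_D ZT; split.
- move=> [Xx [p [/(Pu_chain_Tu _ ZT) [ch _] [p_k lp_px]]]].
  have [M [al [be [i it]]]] : exists M al be i,
      earley R S (staged Tu k u) k (M, al, Tm x.1 :: be, i, k).
    by apply/earley_terminal_iff; exists p; split=> //; rewrite cats1 -map_rcons.
  by exists x.1, M, al, be, i; split=> //; apply/(Ju_earleyP R S Lex D Sel_ok _ _).
- move=> [X [M [al [be [i [/(Ju_earleyP R S Lex D Sel_ok _ _) it Lx]]]]]].
  have [x1_X _] := Lex_ok k_D Lx.
  have [p [ch p_k lp_pX]] : exists p, [/\ chain (staged Tu k u) 0 p, size (chars p) = k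
                                         & lp (terms p ++ [:: X])].
    by apply/earley_terminal_iff; exists M, al, be, i.
  split; first by rewrite /Xk x1_X.
  exists p; split; first by apply/(Pu_chain_Tu _ ZT); split=> //; apply: lang_prefix_cat lp_pX.
  by split=> //; rewrite /terms map_rcons x1_X -cats1.
Qed.

Lemma Zu_Tu k u x : k <= size D -> Zu k u x <-> Tu k u x.
Proof.
elim/ltn_ind: k u x => k IHk u x k_D.
have IHlt j : j < k -> forall u x, Zu j u x <-> Tu j u x.
  by move=> lt_jk u' y; apply: IHk => //; lia.
elim: u x => [//|u IHu] x.
have ZT j y : staged Zu k u j y <-> staged Tu k u j y := staged_iff j y IHlt IHu.
(* [Sel] need not respect equivalence of its arguments, hence [pred_ext]. *)
by rewrite ZuS TuS (pred_ext IHu) (pred_ext (fun y => Wk_scan_candidates y k_D ZT)).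
Qed.

Lemma staged_Zu_Tu u j x :
  staged Zu (size D) u j x <-> staged Tu (size D) u j x.
Proof. by apply: staged_iff => [j' lt_j' u' y | y]; apply: Zu_Tu => //; lia. Qed.

End Correspondence.

Theorem theorem2 (N T Sigma : Type) (R : N -> seq (symbol N T) -> Prop) (S : N)
    (Lex : @lexer T Sigma) (Sel : @selector T Sigma) (D : seq Sigma) :
  is_lexer Lex -> is_selector Sel ->
  ((exists p, ll R S Lex Sel D p) <->
   (exists alpha, frakI R S Lex Sel D (S, alpha, [::], 0, size D))).
Proof.
move=> Lex_ok Sel_ok; have ZT := staged_Zu_Tu R S D Lex_ok Sel_ok.
split.
- move=> [p [[u /(Pu_chain_Tu Sel_ok _ (ZT u)) [ch _]] [p_D lang_p]]].
  have [al acc] : exists al, earley R S (staged (Tu R S Lex Sel D) (size D) u) (size D)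
                                   (S, al, [::], 0, size D).
    by apply/earley_accept_iff; exists p.
  by exists al, u; apply/(Ju_earleyP R S Lex D Sel_ok _ _).
- move=> [al [u /(Ju_earleyP R S Lex D Sel_ok _ _) acc]].
  have [p [ch p_D lang_p]] := (earley_accept_iff R S _ _).1 (ex_intro _ al acc).
  exists p; split=> //; exists u; apply/(Pu_chain_Tu Sel_ok _ (ZT u)).
  by split=> //; apply: lang_prefix_lang.
Qed.
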